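(* The map $\tau_{sm}:\widetilde{\mathbb{K}}_{sm}\to\widetilde{\mathbb{K}}_{co}$, $[(r_\varepsilon)_\varepsilon]\mapsto[(r_\varepsilon)_\varepsilon]$, is a ring isomorphism; i.e., $\widetilde{\mathbb{K}}_{sm}\cong\widetilde{\mathbb{K}}_{co}$ via $\tau_{sm}$.
   Context: Let $I=(0,1]$ and $\mathbb{K}\in\{\mathbb{R},\mathbb{C}\}$. Let $\mathcal{E}_M=\{(r_\varepsilon)_\varepsilon\in\mathbb{K}^I:\exists N\in\mathbb{N}: |r_\varepsilon|=O(\varepsilon^{-N})\text{ as }\varepsilon\to0\}$ and $\mathcal{N}=\{(r_\varepsilon)_\varepsilon\in\mathbb{K}^I:\forall m\in\mathbb{N}: |r_\varepsilon|=O(\varepsilon^{m})\}$. Let $\mathcal{E}_{M,co}$, $\mathcal{N}_{co}$ (resp. $\mathcal{E}_{M,sm}$, $\mathcal{N}_{sm}$) be the subsets of $\mathcal{E}_M$, $\mathcal{N}$ consisting of nets with $\varepsilon\mapsto r_\varepsilon$ continuous (resp. smooth) on $I$; $\widetilde{\mathbb{K}}_{co}=\mathcal{E}_{M,co}/\mathcal{N}_{co}$ and $\widetilde{\mathbb{K}}_{sm}=\mathcal{E}_{M,sm}/\mathcal{N}_{sm}$ are rings with componentwise operations. *)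

From Stdlib Require Import Reals.
From Coquelicot Require Import Coquelicot.
Open Scope R_scope.

Inductive Kfield : Type := KR | KC.

Definition Kty (k : Kfield) : Type := match k with KR => R | KC => C end.

Definition Kabs (k : Kfield) : Kty k -> R :=
  match k return Kty k -> R with KR => Rabs | KC => Cmod end.

Definition Ksub (k : Kfield) : Kty k -> Kty k -> Kty k :=
  match k return Kty k -> Kty k -> Kty k with
  | KR => fun x y => x - y
  | KC => fun x y => Cminus x y end.

(* Nets (r_eps)_{eps in I}, I = (0,1]; represented as functions R -> K whose
   values outside I are irrelevant (all definitions only look at eps in I). *)
Definition net (k : Kfield) : Type := R -> Kty k.

Definition inI (e : R) : Prop := 0 < e <= 1.

Definition net_sub {k : Kfield} (r s : net k) : net k := fun e => Ksub k (r e) (s e).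

Definition moderate {k : Kfield} (r : net k) : Prop :=
  exists (N : nat) (c eta : R), 0 < eta /\
    forall e, 0 < e < eta -> e <= 1 -> Kabs k (r e) <= c / (e ^ N).

Definition negligible {k : Kfield} (r : net k) : Prop :=
  forall m : nat, exists (c eta : R), 0 < eta /\
    forall e, 0 < e < eta -> e <= 1 -> Kabs k (r e) <= c * (e ^ m).

Definition cont_I {k : Kfield} (r : net k) : Prop :=
  forall x, inI x -> forall eps, 0 < eps -> exists delta, 0 < delta /\
    forall y, inI y -> Rabs (y - x) < delta -> Kabs k (Ksub k (r y) (r x)) < eps.

Definition smooth_on_open (a b : R) (f : R -> R) : Prop :=
  forall (n : nat) (x : R), a < x < b -> ex_derive_n f n x.

Definition Ksmooth_on_open (k : Kfield) (a b : R) : (R -> Kty k) -> Prop :=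
  match k return (R -> Kty k) -> Prop with
  | KR => fun f => smooth_on_open a b f
  | KC => fun f => smooth_on_open a b (fun x => fst (f x)) /\
                   smooth_on_open a b (fun x => snd (f x)) end.

(* eps |-> r_eps smooth on I = (0,1]: it agrees on I with a function that is
   C^infinity on an open interval (0, 1 + delta) containing I (so that the
   closed endpoint 1 is handled; this is the strongest standard reading). *)
Definition smooth_I {k : Kfield} (r : net k) : Prop :=
  exists (g : net k) (delta : R), 0 < delta /\
    (forall e, inI e -> g e = r e) /\ Ksmooth_on_open k 0 (1 + delta) g.

Definition EM_co {k : Kfield} (r : net k) : Prop := moderate r /\ cont_I r.
Definition N_co  {k : Kfield} (r : net k) : Prop := negligible r /\ cont_I r.
Definition EM_sm {k : Kfield} (r : net k) : Prop := moderate r /\ smooth_I r.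
Definition N_sm  {k : Kfield} (r : net k) : Prop := negligible r /\ smooth_I r.

(* Equality in the quotient rings K_co = EM_co / N_co and K_sm = EM_sm / N_sm *)
Definition eq_co {k : Kfield} (r s : net k) : Prop := N_co (net_sub r s).
Definition eq_sm {k : Kfield} (r s : net k) : Prop := N_sm (net_sub r s).

(* Smooth nets are continuous and differences of smooth nets are smooth, so
   tau_sm is well defined and injective.  For surjectivity, a continuous net r
   is approximated on (0,1] up to the negligible error exp(-1/eps) by a net
   that is smooth on (0,oo): choose nodes 1 = t_0 > t_1 > ... -> 0 so close
   together that r oscillates by at most exp(-2/t_j) on [t_(j+1), t_j], and
   glue the values r(t_j) with the smooth step built from exp(-1/x).  Near any
   eps > 0 only finitely many nodes are involved, so the result is smooth. *)

From Stdlib Require Import Reals Lra Lia Classical.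
From Coquelicot Require Import Coquelicot.
Open Scope R_scope.

(* A global counterpart of [ex_derive_n]: unlike the latter it is closed under
   products and quotients by a plain induction on n. *)
Fixpoint derivable_n (n : nat) (f : R -> R) : Prop :=
  match n with
  | O => True
  | S n => exists f', (forall x, is_derive f x (f' x)) /\ derivable_n n f'
  end.

Lemma derivable_n_ext n f g :
  (forall x, f x = g x) -> derivable_n n f -> derivable_n n g.
Proof.
  destruct n as [|n]; simpl; auto.
  intros Hfg [f' [Hf Hf']]. exists f'; split; auto.
  intro x. apply is_derive_ext with f; auto.
Qed.

Lemma derivable_nS n f : derivable_n (S n) f -> derivable_n n f.
Proof.
  revert f; induction n as [|n IH]; simpl; auto.
  intros f [f' [Hf Hf']]. exists f'; split; auto.
Qed.

Lemma derivable_n_const n c : derivable_n n (fun _ => c).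
Proof.
  revert c; induction n as [|n IH]; intro c; simpl; auto.
  exists (fun _ => 0); split; auto. intro x. apply (is_derive_const c x).
Qed.

Lemma derivable_n_plus n f g :
  derivable_n n f -> derivable_n n g -> derivable_n n (fun x => f x + g x).
Proof.
  revert f g; induction n as [|n IH]; simpl; auto.
  intros f g [f' [Hf Hf']] [g' [Hg Hg']].
  exists (fun x => f' x + g' x); split; auto.
  intro x. now apply (is_derive_plus f g).
Qed.

Lemma derivable_n_scal n c f : derivable_n n f -> derivable_n n (fun x => c * f x).
Proof.
  revert f; induction n as [|n IH]; simpl; auto.
  intros f [f' [Hf Hf']]. exists (fun x => c * f' x); split; auto.
  intro x. now apply is_derive_scal.
Qed.

Lemma derivable_n_mult n f g :
  derivable_n n f -> derivable_n n g -> derivable_n n (fun x => f x * g x).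
Proof.
  revert f g; induction n as [|n IH]; simpl; auto.
  intros f g Hf Hg.
  pose proof (derivable_nS n f Hf) as Hfn. pose proof (derivable_nS n g Hg) as Hgn.
  destruct Hf as [f' [Hf Hf']], Hg as [g' [Hg Hg']].
  exists (fun x => f' x * g x + f x * g' x); split.
  - intro x. apply (is_derive_mult f g); auto. intros; apply Rmult_comm.
  - apply derivable_n_plus; apply IH; auto.
Qed.

Lemma derivable_n_inv n u :
  (forall x, u x <> 0) -> derivable_n n u -> derivable_n n (fun x => / u x).
Proof.
  intro Hu0. revert u Hu0; induction n as [|n IH]; simpl; auto.
  intros u Hu0 Hu. pose proof (derivable_nS n u Hu) as Hun.
  destruct Hu as [u' [Hu Hu']].
  exists (fun x => (-1) * u' x * (/ u x * / u x)); split.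
  - intro x. replace ((-1) * u' x * (/ u x * / u x)) with (- u' x / u x ^ 2)
      by (field; auto).
    now apply is_derive_inv.
  - apply derivable_n_mult; [apply derivable_n_scal; auto|].
    apply derivable_n_mult; apply IH; auto.
Qed.

Lemma derivable_n_affine n a c f :
  derivable_n n f -> derivable_n n (fun x => f (a * x + c)).
Proof.
  revert f; induction n as [|n IH]; simpl; auto.
  intros f [f' [Hf Hf']].
  exists (fun x => a * f' (a * x + c)); split.
  - intro x. apply (is_derive_comp f (fun y => a * y + c)); [apply Hf|].
    auto_derive; auto; ring.
  - apply derivable_n_scal, IH; auto.
Qed.

Lemma ex_derive_Derive_n n f :
  derivable_n (S n) f -> forall x, ex_derive (Derive_n f n) x.
Proof.
  revert f; induction n as [|n IH]; intros f Hf x.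
  - destruct Hf as [f' [Hf _]]. exists (f' x); apply Hf.
  - destruct Hf as [f' [Hf Hf']].
    apply ex_derive_ext with (Derive_n f' n); [|now apply IH].
    intro t. replace (S n) with (n + 1)%nat by lia.
    rewrite <- (Derive_n_comp f n 1). apply Derive_n_ext.
    intro y. symmetry. now apply is_derive_unique.
Qed.

Lemma ex_derive_n_of_derivable_n f :
  (forall n, derivable_n n f) -> forall n x, ex_derive_n f n x.
Proof. intros Hf [|n] x; simpl; auto. now apply ex_derive_Derive_n. Qed.

Lemma exp_neg_inv_le_pow n x : 0 < x -> exp (- / x) <= (INR n * x) ^ n.
Proof.
  intro Hx. destruct n as [|n].
  - simpl. rewrite <- exp_0. apply Rlt_le, exp_increasing.
    pose proof (Rinv_0_lt_compat x Hx). lra.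
  - set (N := INR (S n)). assert (HN : 0 < N) by (apply lt_0_INR; lia).
    set (y := / x). assert (Hy : 0 < y) by (apply Rinv_0_lt_compat; auto).
    (* exp y = exp (y/N) ^ N >= (y/N) ^ N *)
    assert (Hpow : (y / N) ^ S n <= exp y).
    { replace (exp y) with (exp (y / N) ^ S n).
      - apply pow_incr. split.
        + apply Rlt_le, Rdiv_lt_0_compat; auto.
        + pose proof (exp_ineq1_le (y / N)). lra.
      - rewrite <- Rpower_pow by apply exp_pos. unfold Rpower. rewrite ln_exp.
        f_equal. unfold N. field. fold N. lra. }
    assert (Hpos : 0 < (y / N) ^ S n) by (apply pow_lt, Rdiv_lt_0_compat; auto).
    rewrite exp_Ropp.
    replace ((N * x) ^ S n) with (/ ((y / N) ^ S n)).
    + now apply Rinv_le_contravar.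
    + rewrite <- pow_inv. f_equal. unfold y. field. split; lra.
Qed.
Lemma is_derive_0_of_sqr_bound f C :
  f 0 = 0 -> (forall h, Rabs (f h) <= C * h ^ 2) -> is_derive f 0 0.
Proof.
  intros Hf0 Hf. apply is_derive_Reals. intros eps Heps.
  pose proof (Rabs_pos C) as HC.
  assert (Hd : 0 < eps / (Rabs C + 1)) by (apply Rdiv_lt_0_compat; lra).
  exists (mkposreal _ Hd). intros h Hh0 Hh. simpl in Hh.
  assert (Ha : 0 < Rabs h) by now apply Rabs_pos_lt.
  replace ((f (0 + h) - f 0) / h - 0) with (f h / h)
    by (rewrite Rplus_0_l, Hf0; field; auto).
  rewrite Rabs_div by auto. apply Rlt_div_l; auto.
  assert (Hlt : (Rabs C + 1) * Rabs h < eps).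
  { replace eps with ((Rabs C + 1) * (eps / (Rabs C + 1))) by (field; lra).
    apply Rmult_lt_compat_l; lra. }
  assert (Hfh : Rabs (f h) <= Rabs C * Rabs h * Rabs h).
  { eapply Rle_trans; [apply Hf|].
    eapply Rle_trans; [apply Rle_abs|].
    rewrite Rabs_mult, <- RPow_abs. right; ring. }
  nra.
Qed.

Definition flat (k : nat) (x : R) : R :=
  if Rlt_dec 0 x then (/ x) ^ k * exp (- / x) else 0.

Lemma flat_pos k x : 0 < x -> flat k x = (/ x) ^ k * exp (- / x).
Proof. intro Hx. unfold flat. destruct (Rlt_dec 0 x); [auto | lra]. Qed.

Lemma flat_nonpos k x : x <= 0 -> flat k x = 0.
Proof. intro Hx. unfold flat. destruct (Rlt_dec 0 x); [lra | auto]. Qed.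

Lemma flat_ge0 k x : 0 <= flat k x.
Proof.
  destruct (Rlt_le_dec 0 x) as [Hx|Hx]; [|rewrite flat_nonpos; auto; lra].
  rewrite flat_pos by auto. apply Rmult_le_pos; [|apply Rlt_le, exp_pos].
  apply pow_le, Rlt_le, Rinv_0_lt_compat; auto.
Qed.

Lemma flat_le_sqr k h : Rabs (flat k h) <= INR (S (S k)) ^ S (S k) * h ^ 2.
Proof.
  rewrite Rabs_pos_eq by apply flat_ge0.
  destruct (Rlt_le_dec 0 h) as [Hh|Hh].
  - rewrite flat_pos by auto.
    apply Rle_trans with ((/ h) ^ k * (INR (S (S k)) * h) ^ S (S k)).
    + apply Rmult_le_compat_l; [apply pow_le, Rlt_le, Rinv_0_lt_compat; auto|].
      now apply exp_neg_inv_le_pow.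
    + right. rewrite Rpow_mult_distr, pow_inv.
      replace (h ^ S (S k)) with (h ^ k * h ^ 2) by (simpl; ring).
      field. apply pow_nonzero; lra.
  - rewrite flat_nonpos by auto.
    apply Rmult_le_pos; [apply pow_le, pos_INR | apply pow2_ge_0].
Qed.

Lemma is_derive_flat k x :
  is_derive (flat k) x (- INR k * flat (S k) x + flat (S (S k)) x).
Proof.
  destruct (Rtotal_order x 0) as [Hx|[Hx|Hx]].
  - rewrite !flat_nonpos by lra.
    apply is_derive_ext_loc with (fun _ => 0).
    + apply locally_open with (fun u => u < 0); [apply open_lt| |auto].
      intros y Hy. rewrite flat_nonpos; auto; lra.
    + replace (- INR k * 0 + 0) with 0 by ring. apply (is_derive_const 0).
  - subst x. rewrite !flat_nonpos by lra. replace (- INR k * 0 + 0) with 0 by ring.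
    apply is_derive_0_of_sqr_bound with (INR (S (S k)) ^ S (S k)).
    + now apply flat_nonpos.
    + apply flat_le_sqr.
  - rewrite !flat_pos by auto.
    apply is_derive_ext_loc with (fun y => (/ y) ^ k * exp (- / y)).
    + apply locally_open with (fun u => 0 < u); [apply open_gt| |auto].
      intros y Hy. rewrite flat_pos; auto.
    + auto_derive; [lra|]. destruct k as [|k]; simpl; field; lra.
Qed.

Lemma derivable_n_flat n k : derivable_n n (flat k).
Proof.
  revert k; induction n as [|n IH]; intro k; simpl; auto.
  exists (fun x => - INR k * flat (S k) x + flat (S (S k)) x); split.
  - apply is_derive_flat.
  - apply derivable_n_plus; [apply derivable_n_scal|]; apply IH.
Qed.

Definition smooth_step (x : R) : R := flat 0 x / (flat 0 x + flat 0 (1 - x)).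

Lemma flat0_pos x : 0 < x -> 0 < flat 0 x.
Proof. intro Hx. rewrite flat_pos by auto. rewrite pow_O, Rmult_1_l. apply exp_pos. Qed.

Lemma smooth_step_denom_pos x : 0 < flat 0 x + flat 0 (1 - x).
Proof.
  pose proof (flat_ge0 0 x). pose proof (flat_ge0 0 (1 - x)).
  destruct (Rlt_le_dec 0 x) as [Hx|Hx].
  - pose proof (flat0_pos x Hx). lra.
  - pose proof (flat0_pos (1 - x) ltac:(lra)). lra.
Qed.

Lemma derivable_n_smooth_step n : derivable_n n smooth_step.
Proof.
  apply derivable_n_mult; [apply derivable_n_flat|].
  apply derivable_n_inv.
  - intro x. pose proof (smooth_step_denom_pos x). lra.
  - apply derivable_n_plus; [apply derivable_n_flat|].
    apply derivable_n_ext with (fun x => flat 0 ((-1) * x + 1)).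
    + intro x. f_equal. ring.
    + apply derivable_n_affine, derivable_n_flat.
Qed.

Lemma smooth_step_le0 x : x <= 0 -> smooth_step x = 0.
Proof. intro Hx. unfold smooth_step. rewrite (flat_nonpos 0 x Hx). unfold Rdiv; ring. Qed.

Lemma smooth_step_ge1 x : 1 <= x -> smooth_step x = 1.
Proof.
  intro Hx. unfold smooth_step. rewrite (flat_nonpos 0 (1 - x)), Rplus_0_r by lra.
  field. pose proof (flat0_pos x ltac:(lra)). lra.
Qed.

Lemma smooth_step_range x : 0 <= smooth_step x <= 1.
Proof.
  unfold smooth_step. pose proof (smooth_step_denom_pos x).
  pose proof (flat_ge0 0 x). pose proof (flat_ge0 0 (1 - x)).
  split.
  - apply Rdiv_le_0_compat; lra.
  - apply Rmult_le_reg_r with (flat 0 x + flat 0 (1 - x)); auto.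
    unfold Rdiv. rewrite Rmult_assoc, Rinv_l; lra.
Qed.

Lemma cont_I_unif_cont (r : R -> R) : @cont_I KR r ->
  forall a, 0 < a <= 1 -> forall eps, 0 < eps -> exists d, 0 < d /\
  forall x y, a <= x <= 1 -> a <= y <= 1 -> Rabs (x - y) < d -> Rabs (r x - r y) < eps.
Proof.
  intros Hr a Ha eps Heps.
  set (clamp := fun y => Rmax a (Rmin 1 y)).
  assert (Hclamp : forall y, a <= y <= 1 -> clamp y = y).
  { intros y Hy. unfold clamp. rewrite Rmin_right, Rmax_right; lra. }
  (* clamping to [a, 1] is 1-Lipschitz, so [r \o clamp] is continuous at every point of [a, 1] *)
  assert (Hcont : forall x, a <= x <= 1 -> continuity_pt (fun y => r (clamp y)) x).
  { intros x Hx e He. destruct (Hr x ltac:(unfold inI; lra) e He) as [d [Hd H]].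
    exists d; split; auto. intros y [_ Hy]. simpl in *. unfold R_dist in *.
    rewrite (Hclamp x Hx). apply H.
    - unfold inI, clamp. split; [apply Rlt_le_trans with a; [lra|apply Rmax_l]|].
      apply Rmax_lub; [lra|apply Rmin_l].
    - eapply Rle_lt_trans; [|exact Hy]. unfold clamp, Rmax, Rmin.
      repeat destruct Rle_dec; unfold Rabs; repeat destruct Rcase_abs; lra. }
  destruct (Heine _ (fun c => a <= c <= 1) (compact_P3 a 1) Hcont (mkposreal eps Heps))
    as [d Hd].
  exists d; split; [apply cond_pos|]. intros x y Hx Hy Hxy.
  pose proof (Hd x y Hx Hy Hxy) as H. simpl in H. now rewrite !Hclamp in H.
Qed.

Section SmoothApproximation.

Variables r eta : R -> R.
Hypothesis r_cont : @cont_I KR r.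
Hypothesis eta_pos : forall x, 0 < x -> 0 < eta x.
Hypothesis eta_le : forall a b, 0 < a -> a <= b -> eta a <= eta b.

Definition admissible_step (t d : R) : Prop :=
  0 < d <= t / 4 /\ forall x y, t / 2 <= x <= 1 -> t / 2 <= y <= 1 ->
    Rabs (x - y) <= d -> Rabs (r x - r y) <= eta (t / 2).

Lemma admissible_step_exists t : 0 < t <= 1 -> exists d, admissible_step t d.
Proof.
  intro Ht.
  assert (Heta : 0 < eta (t / 2)) by (apply eta_pos; lra).
  destruct (cont_I_unif_cont r r_cont (t / 2) ltac:(lra) _ Heta) as [d [Hd H]].
  exists (Rmin (d / 2) (t / 4)). split.
  - split; [apply Rmin_glb_lt; lra | apply Rmin_r].
  - intros x y Hx Hy Hxy. apply Rlt_le, H; auto.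
    pose proof (Rmin_l (d / 2) (t / 4)). lra.
Qed.

Lemma admissible_step_le t t' d :
  0 < t -> t <= t' -> admissible_step t d -> admissible_step t' d.
Proof.
  intros Ht Htt [[Hd Hdt] H]. split; [lra|].
  intros x y Hx Hy Hxy. eapply Rle_trans; [apply H; auto; lra|]. apply eta_le; lra.
Qed.

Lemma admissible_step_le_step t d d' :
  admissible_step t d -> 0 < d' <= d -> admissible_step t d'.
Proof. intros [[Hd Hdt] H] Hd'. split; [lra|]. intros x y Hx Hy Hxy. apply H; auto; lra. Qed.

(* Half the supremum of the admissible steps: a choice of step that is
   monotone in [t], which forces the nodes below to reach 0. *)
Definition step_size (t : R) : R := real (Lub_Rbar (admissible_step t)) / 2.

Lemma step_size_spec t : 0 < t <= 1 ->
  admissible_step t (step_size t) /\ forall d, admissible_step t d -> d / 2 <= step_size t.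
Proof.
  intro Ht. destruct (admissible_step_exists t Ht) as [d0 Hd0].
  destruct (Lub_Rbar_correct (admissible_step t)) as [Hub Hlub].
  assert (Hle : Rbar_le (Lub_Rbar (admissible_step t)) (t / 4)).
  { apply Hlub. intros d [[_ Hd] _]. exact Hd. }
  pose proof (Hub d0 Hd0) as Hge.
  unfold step_size. destruct (Lub_Rbar (admissible_step t)) as [m| |]; simpl in *;
    try contradiction.
  assert (Hm : 0 < m) by (destruct Hd0 as [[? _] _]; lra).
  split.
  - destruct (classic (exists d, admissible_step t d /\ m / 2 < d)) as [[d [Hd Hmd]]|Hno].
    + apply admissible_step_le_step with d; auto. lra.
    + assert (Hm2 : m <= m / 2).
      { apply (Hlub (m / 2)). intros d Hd. simpl. apply Rnot_lt_le. intro Hmd. apply Hno. eauto. }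
      lra.
  - intros d Hd. pose proof (Hub d Hd). simpl in *. lra.
Qed.

Fixpoint node (j : nat) : R :=
  match j with O => 1 | S j => node j - step_size (node j) end.

Lemma node_bounds j : 0 < node j <= 1 /\ 3 / 4 * node j <= node (S j) < node j.
Proof.
  induction j as [|j IH].
  - simpl. destruct (step_size_spec 1 ltac:(lra)) as [[[H1 H2] _] _]. lra.
  - assert (Hj : 0 < node (S j) <= 1) by lra. split; auto.
    destruct (step_size_spec _ Hj) as [[[H1 H2] _] _]. simpl in *. lra.
Qed.

Lemma node_anti j j' : (j <= j')%nat -> node j' <= node j.
Proof. induction 1 as [|j' _ IH]; [lra|]. pose proof (node_bounds j'). lra. Qed.

Lemma node_lt x : 0 < x -> exists K, node K < x.
Proof.
  intro Hx. set (x' := Rmin x 1).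
  assert (Hx' : 0 < x' <= 1) by (split; [apply Rmin_glb_lt; lra|apply Rmin_r]).
  destruct (admissible_step_exists x' Hx') as [d Hd].
  set (c := d / 2). assert (Hc : 0 < c) by (destruct Hd as [[? _] _]; unfold c; lra).
  (* while the nodes stay above x' every step has size at least c *)
  assert (Hdrop : forall K, node K < x' \/ node K <= 1 - INR K * c).
  { induction K as [|K [IH|IH]]; [right; simpl; lra|left; pose proof (node_bounds K); lra|].
    destruct (Rlt_le_dec (node K) x') as [Hlt|Hge]; [left; pose proof (node_bounds K); lra|].
    right. pose proof (node_bounds K) as [HK _].
    destruct (step_size_spec _ HK) as [_ Hmin].
    pose proof (Hmin d (admissible_step_le x' (node K) d ltac:(lra) Hge Hd)).
    rewrite S_INR. simpl. unfold c in *. lra. }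
  destruct (INR_unbounded (/ c)) as [K HK].
  assert (HKc : 1 < INR K * c).
  { apply Rmult_lt_reg_r with (/ c); [now apply Rinv_0_lt_compat|].
    rewrite Rmult_assoc, Rinv_r, Rmult_1_l, Rmult_1_r; lra. }
  exists K. pose proof (node_bounds K). pose proof (Rmin_l x 1).
  destruct (Hdrop K); unfold x' in *; lra.
Qed.

Lemma node_cover x : 0 < x <= 1 -> exists k, node (S k) <= x <= node k.
Proof.
  intro Hx. destruct (node_lt x ltac:(lra)) as [K HK].
  induction K as [|K IH]; [simpl in HK; lra|].
  destruct (Rle_dec x (node K)); [exists K; lra | apply IH; lra].
Qed.

Definition blend_weight (j : nat) (x : R) : R :=
  smooth_step ((x - node (S j)) / (node j - node (S j))).

Fixpoint blend (K : nat) (x : R) : R :=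
  match K with
  | O => r (node O)
  | S K => blend_weight K x * blend K x + (1 - blend_weight K x) * r (node (S K))
  end.

Definition smooth_approx (x : R) : R := real (Lim_seq (fun K => blend K x)).

Lemma blend_weight_1 j x : node j <= x -> blend_weight j x = 1.
Proof.
  intro Hx. pose proof (node_bounds j). apply smooth_step_ge1.
  apply Rmult_le_reg_r with (node j - node (S j)); [lra|].
  unfold Rdiv. rewrite Rmult_assoc, Rinv_l; lra.
Qed.

Lemma blend_weight_0 j x : x <= node (S j) -> blend_weight j x = 0.
Proof.
  intro Hx. pose proof (node_bounds j). apply smooth_step_le0.
  apply Rmult_le_0_r; [lra|]. apply Rlt_le, Rinv_0_lt_compat; lra.
Qed.

Lemma derivable_n_blend n K : derivable_n n (blend K).
Proof.
  assert (Hw : forall j, derivable_n n (blend_weight j)).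
  { intro j. unfold blend_weight.
    apply derivable_n_ext with (fun x => smooth_step
      (/ (node j - node (S j)) * x + - node (S j) / (node j - node (S j)))).
    - intro x. f_equal. unfold Rdiv. ring.
    - apply derivable_n_affine, derivable_n_smooth_step. }
  induction K as [|K IH]; simpl; [apply derivable_n_const|].
  apply derivable_n_plus; apply derivable_n_mult; auto; [|apply derivable_n_const].
  apply derivable_n_ext with (fun x => 1 + (-1) * blend_weight K x); [intro; ring|].
  apply derivable_n_plus; [apply derivable_n_const | apply derivable_n_scal; auto].
Qed.

Lemma blend_stable K K' x : node K <= x -> (K <= K')%nat -> blend K' x = blend K x.
Proof.
  intros Hx. induction 1 as [|K' HK IH]; auto.
  simpl. rewrite blend_weight_1, IH; [ring|].
  pose proof (node_anti K K' HK). lra.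
Qed.

Lemma blend_below K x : x <= node K -> blend K x = r (node K).
Proof. destruct K; intro Hx; simpl; auto. rewrite blend_weight_0; auto. ring. Qed.

Lemma smooth_approx_eq K x : node K <= x -> smooth_approx x = blend K x.
Proof.
  intro Hx. unfold smooth_approx.
  rewrite (Lim_seq_ext_loc _ (fun _ => blend K x)), Lim_seq_const; auto.
  exists K. intros n Hn. now apply blend_stable.
Qed.

Lemma smooth_approx_smooth n x : 0 < x -> ex_derive_n smooth_approx n x.
Proof.
  intro Hx. destruct (node_lt x Hx) as [K HK].
  apply ex_derive_n_ext_loc with (blend K).
  - apply locally_open with (fun u => node K < u); [apply open_gt| |auto].
    intros y Hy. symmetry. apply smooth_approx_eq. lra.
  - apply ex_derive_n_of_derivable_n. intro; apply derivable_n_blend.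
Qed.

Lemma smooth_approx_err x : 0 < x <= 1 -> Rabs (smooth_approx x - r x) <= eta x.
Proof.
  intro Hx. destruct (node_cover x Hx) as [k Hk].
  pose proof (node_bounds k) as [Hk1 Hk2].
  destruct (step_size_spec _ Hk1) as [[_ Hosc] _].
  assert (Hstep : node (S k) = node k - step_size (node k)) by reflexivity.
  rewrite (smooth_approx_eq (S k) x) by lra. cbn [blend].
  rewrite blend_below by lra.
  set (l := blend_weight k x). pose proof (smooth_step_range
    ((x - node (S k)) / (node k - node (S k)))) as Hl. fold (blend_weight k x) l in Hl.
  assert (Heta : eta (node k / 2) <= eta x) by (apply eta_le; lra).
  assert (A : Rabs (r (node k) - r x) <= eta x).
  { eapply Rle_trans; [|exact Heta]. apply Hosc; try lra. rewrite Rabs_right; lra. }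
  assert (B : Rabs (r (node (S k)) - r x) <= eta x).
  { eapply Rle_trans; [|exact Heta]. apply Hosc; try lra. rewrite Rabs_left1; lra. }
  replace (l * r (node k) + (1 - l) * r (node (S k)) - r x)
    with (l * (r (node k) - r x) + (1 - l) * (r (node (S k)) - r x)) by ring.
  eapply Rle_trans; [apply Rabs_triang|].
  rewrite !Rabs_mult, (Rabs_right l), (Rabs_right (1 - l)) by lra.
  apply Rmult_le_compat_l with (r := l) in A; [|lra].
  apply Rmult_le_compat_l with (r := 1 - l) in B; lra.
Qed.

Lemma smooth_approximation : exists s : R -> R,
  (forall n x, 0 < x -> ex_derive_n s n x) /\
  (forall x, 0 < x <= 1 -> Rabs (s x - r x) <= eta x).
Proof.
  exists smooth_approx. split; [exact smooth_approx_smooth | exact smooth_approx_err].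
Qed.

End SmoothApproximation.

Lemma Cmod_le_abs_fst_snd (z : C) : Cmod z <= Rabs (fst z) + Rabs (snd z).
Proof.
  unfold Cmod. destruct z as [a b]; cbn [fst snd].
  pose proof (Rabs_pos a). pose proof (Rabs_pos b).
  rewrite <- (sqrt_pow2 (Rabs a + Rabs b)) by lra.
  apply sqrt_le_1_alt. rewrite <- (pow2_abs a), <- (pow2_abs b). nra.
Qed.

Lemma Kabs_le_sub k (a b : Kty k) : Kabs k a <= Kabs k b + Kabs k (Ksub k a b).
Proof.
  destruct k; simpl in *.
  - replace a with (b + (a - b)) at 1 by ring. apply Rabs_triang.
  - replace a with (Cplus b (Cminus a b)) at 1 by (destruct a, b; apply injective_projections; simpl; ring).
    apply Cmod_triangle.
Qed.

Lemma Kabs_sub_sub k (a b c d : Kty k) :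
  Kabs k (Ksub k (Ksub k a b) (Ksub k c d)) <= Kabs k (Ksub k a c) + Kabs k (Ksub k b d).
Proof.
  destruct k; simpl in *.
  - replace (a - b - (c - d)) with ((a - c) + - (b - d)) by ring.
    rewrite <- (Rabs_Ropp (b - d)). apply Rabs_triang.
  - replace (Cminus (Cminus a b) (Cminus c d)) with (Cplus (Cminus a c) (Copp (Cminus b d)))
      by (destruct a, b, c, d; apply injective_projections; simpl; ring).
    rewrite <- (Cmod_opp (Cminus b d)). apply Cmod_triangle.
Qed.

Lemma cont_I_ext k (r s : net k) : (forall e, inI e -> r e = s e) -> cont_I r -> cont_I s.
Proof.
  intros Hrs Hr x Hx eps Heps. destruct (Hr x Hx eps Heps) as [d [Hd H]].
  exists d; split; auto. intros y Hy Hyx. rewrite <- !Hrs by auto. auto.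
Qed.

Lemma cont_I_sub k (r s : net k) : cont_I r -> cont_I s -> cont_I (net_sub r s).
Proof.
  intros Hr Hs x Hx eps Heps.
  destruct (Hr x Hx (eps / 2) ltac:(lra)) as [d1 [Hd1 H1]].
  destruct (Hs x Hx (eps / 2) ltac:(lra)) as [d2 [Hd2 H2]].
  exists (Rmin d1 d2); split; [now apply Rmin_glb_lt|].
  intros y Hy Hyx. pose proof (Rmin_l d1 d2). pose proof (Rmin_r d1 d2).
  eapply Rle_lt_trans; [apply Kabs_sub_sub|].
  pose proof (H1 y Hy ltac:(lra)). pose proof (H2 y Hy ltac:(lra)). lra.
Qed.

Lemma cont_I_of_ex_derive (g : R -> R) :
  (forall x, inI x -> ex_derive g x) -> @cont_I KR g.
Proof.
  intros Hg x Hx eps Heps.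
  assert (Hc := proj2 (continuity_pt_filterlim g x) (ex_derive_continuous g x (Hg x Hx))).
  destruct (Hc eps Heps) as [d [Hd H]]. exists d; split; auto.
  intros y _ Hyx. simpl.
  destruct (Req_dec y x) as [->|Hne]; [rewrite Rminus_diag, Rabs_R0; auto|].
  apply H. repeat split; auto.
Qed.

Lemma cont_I_pair (f g : R -> R) :
  @cont_I KR f -> @cont_I KR g -> @cont_I KC (fun x => (f x, g x)).
Proof.
  intros Hf Hg x Hx eps Heps.
  destruct (Hf x Hx (eps / 2) ltac:(lra)) as [d1 [Hd1 H1]].
  destruct (Hg x Hx (eps / 2) ltac:(lra)) as [d2 [Hd2 H2]].
  exists (Rmin d1 d2); split; [now apply Rmin_glb_lt|].
  intros y Hy Hyx. pose proof (Rmin_l d1 d2). pose proof (Rmin_r d1 d2).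
  specialize (H1 y Hy ltac:(lra)). simpl in H1. specialize (H2 y Hy ltac:(lra)).
  eapply Rle_lt_trans; [apply Cmod_le_abs_fst_snd|]. simpl in *. unfold Rminus in *. lra.
Qed.

Lemma cont_I_of_Kabs_le k k' (r : net k) (s : net k') :
  (forall x y, Kabs k' (Ksub k' (s y) (s x)) <= Kabs k (Ksub k (r y) (r x))) ->
  cont_I r -> cont_I s.
Proof.
  intros Hle Hr x Hx eps Heps. destruct (Hr x Hx eps Heps) as [d [Hd H]].
  exists d; split; auto. intros y Hy Hyx. eapply Rle_lt_trans; [apply Hle|]. auto.
Qed.

Lemma smooth_I_cont_I k (r : net k) : smooth_I r -> cont_I r.
Proof.
  intros [g [delta [Hdelta [Hgr Hg]]]]. apply cont_I_ext with g; [exact Hgr|].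
  assert (Hder : forall f, smooth_on_open 0 (1 + delta) f -> forall x, inI x -> ex_derive f x).
  { intros f Hf x Hx. apply (Hf 1%nat x). unfold inI in Hx. lra. }
  destruct k; simpl in Hg.
  - exact (cont_I_of_ex_derive g (Hder g Hg)).
  - apply cont_I_ext with (fun x => (fst (g x), snd (g x)) : C).
    + intros e _. now destruct (g e).
    + apply cont_I_pair; eapply cont_I_of_ex_derive; apply Hder; apply Hg.
Qed.

Lemma smooth_on_open_minus a b f g :
  smooth_on_open a b f -> smooth_on_open a b g -> smooth_on_open a b (fun x => f x - g x).
Proof.
  intros Hf Hg n x Hx.
  assert (Hloc : locally x (fun y => a < y < b)).
  { apply locally_open with (fun y => a < y /\ y < b); auto.
    apply open_and; [apply open_gt | apply open_lt]. }
  apply ex_derive_n_minus; eapply filter_imp; try exact Hloc; intros y Hy m _; auto.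
Qed.

Lemma smooth_on_open_shrink a b b' f :
  b' <= b -> smooth_on_open a b f -> smooth_on_open a b' f.
Proof. intros Hb Hf n x Hx. apply Hf. lra. Qed.

Lemma smooth_I_sub k (r s : net k) : smooth_I r -> smooth_I s -> smooth_I (net_sub r s).
Proof.
  intros [g [d [Hd [Hgr Hg]]]] [g' [d' [Hd' [Hgs Hg']]]].
  exists (net_sub g g'), (Rmin d d'). split; [now apply Rmin_glb_lt|]. split.
  - intros e He. unfold net_sub. rewrite Hgr, Hgs; auto.
  - assert (Hsh : forall b f, b = d \/ b = d' -> smooth_on_open 0 (1 + b) f ->
      smooth_on_open 0 (1 + Rmin d d') f).
    { intros b f Hb. apply smooth_on_open_shrink.
      pose proof (Rmin_l d d'). pose proof (Rmin_r d d'). lra. }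
    destruct k; cbn [Ksmooth_on_open] in *.
    + apply smooth_on_open_minus; [apply (Hsh d) | apply (Hsh d')]; auto.
    + destruct Hg as [Hg1 Hg2], Hg' as [Hg1' Hg2'].
      split.
      * change (smooth_on_open 0 (1 + Rmin d d') (fun x => fst (g x) - fst (g' x))).
        apply smooth_on_open_minus; [apply (Hsh d) | apply (Hsh d')]; auto.
      * change (smooth_on_open 0 (1 + Rmin d d') (fun x => snd (g x) - snd (g' x))).
        apply smooth_on_open_minus; [apply (Hsh d) | apply (Hsh d')]; auto.
Qed.

Lemma moderate_of_bounded_sub k (r s : net k) B : moderate r ->
  (forall e, inI e -> Kabs k (Ksub k (s e) (r e)) <= B) -> moderate s.
Proof.
  intros [N [c [eta [Heta H]]]] HB. exists N, (c + Rabs B), eta. split; auto.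
  intros e He He1. pose proof (H e He He1). pose proof (HB e ltac:(unfold inI; lra)).
  pose proof (Kabs_le_sub k (s e) (r e)).
  assert (HeN : 0 < e ^ N <= 1).
  { split; [apply pow_lt; lra|]. rewrite <- (pow1 N). apply pow_incr. lra. }
  assert (HB1 : Rabs B <= Rabs B / e ^ N).
  { unfold Rdiv. rewrite <- (Rmult_1_r (Rabs B)) at 1.
    apply Rmult_le_compat_l; [apply Rabs_pos|].
    rewrite <- Rinv_1. apply Rinv_le_contravar; lra. }
  pose proof (Rle_abs B). unfold Rdiv in *. rewrite Rmult_plus_distr_r. lra.
Qed.

Lemma negligible_of_le_exp k (r : net k) C :
  (forall e, inI e -> Kabs k (r e) <= C * exp (- / e)) -> negligible r.
Proof.
  intros Hr m. exists (Rabs C * INR m ^ m), 1. split; [lra|].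
  intros e He He1. eapply Rle_trans; [apply Hr; unfold inI; lra|].
  pose proof (exp_neg_inv_le_pow m e ltac:(lra)) as Hexp. rewrite Rpow_mult_distr in Hexp.
  rewrite Rmult_assoc. eapply Rle_trans; [apply Rmult_le_compat_r; [apply Rlt_le, exp_pos|apply Rle_abs]|].
  apply Rmult_le_compat_l; [apply Rabs_pos | exact Hexp].
Qed.

Lemma smooth_I_approximation k (r : net k) : cont_I r -> exists s : net k, smooth_I s /\
  forall e, inI e -> Kabs k (Ksub k (s e) (r e)) <= 2 * exp (- / e).
Proof.
  intro Hr.
  assert (Happrox : forall f : R -> R, @cont_I KR f -> exists g : R -> R,
    smooth_on_open 0 2 g /\ forall e, inI e -> Rabs (g e - f e) <= exp (- / e)).
  { intros f Hf. destruct (smooth_approximation f (fun x => exp (- / x)) Hf) as [g [Hg Herr]].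
    - intros x _. apply exp_pos.
    - intros a b Ha Hab. destruct (Req_dec a b) as [->|Hne]; [lra|].
      apply Rlt_le, exp_increasing, Ropp_lt_contravar, Rinv_lt_contravar; [nra|lra].
    - exists g. split; [intros n x Hx; apply Hg; lra | exact Herr]. }
  assert (Hsm : forall s : net k, Ksmooth_on_open k 0 2 s -> smooth_I s).
  { intros s Hs. exists s, 1. split; [lra|]. split; [auto|].
    now replace (1 + 1) with 2 by ring. }
  destruct k.
  - destruct (Happrox r Hr) as [s [Hs Herr]]. exists s. split; [now apply Hsm|].
    intros e He. pose proof (Herr e He). pose proof (exp_pos (- / e)). simpl. lra.
  - assert (Hfst : @cont_I KR (fun x => fst (r x))).
    { apply (cont_I_of_Kabs_le KC KR r); auto. intros x y.
      pose proof (Rmax_Cmod (Ksub KC (r y) (r x))). pose proof (Rmax_l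
        (Rabs (fst (Ksub KC (r y) (r x)))) (Rabs (snd (Ksub KC (r y) (r x))))). simpl in *. unfold Rminus in *. lra. }
    assert (Hsnd : @cont_I KR (fun x => snd (r x))).
    { apply (cont_I_of_Kabs_le KC KR r); auto. intros x y.
      pose proof (Rmax_Cmod (Ksub KC (r y) (r x))). pose proof (Rmax_r
        (Rabs (fst (Ksub KC (r y) (r x)))) (Rabs (snd (Ksub KC (r y) (r x))))). simpl in *. unfold Rminus in *. lra. }
    destruct (Happrox _ Hfst) as [s1 [Hs1 Herr1]], (Happrox _ Hsnd) as [s2 [Hs2 Herr2]].
    exists (fun x => (s1 x, s2 x)). split; [now apply Hsm|].
    intros e He. eapply Rle_trans; [apply Cmod_le_abs_fst_snd|].
    pose proof (Herr1 e He). pose proof (Herr2 e He). simpl in *. unfold Rminus in *. lra.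
Qed.

Theorem theorem3p6 :
  forall k : Kfield,
    (forall r : net k, EM_sm r -> EM_co r) /\
    (forall r s : net k, EM_sm r -> EM_sm s -> eq_sm r s -> eq_co r s) /\
    (forall r s : net k, EM_sm r -> EM_sm s -> eq_co r s -> eq_sm r s) /\
    (forall r : net k, EM_co r -> exists s : net k, EM_sm s /\ eq_co s r).
Proof.
  intro k. split; [|split; [|split]].
  - intros r [Hm Hs]. split; [exact Hm | now apply smooth_I_cont_I].
  - intros r s _ _ [Hn Hs]. split; [exact Hn | now apply smooth_I_cont_I].
  - intros r s [_ Hr] [_ Hs] [Hn _]. split; [exact Hn | now apply smooth_I_sub].
  - intros r [Hm Hc]. destruct (smooth_I_approximation k r Hc) as [s [Hs Herr]].
    exists s. split; split.
    + apply moderate_of_bounded_sub with r 2; auto. intros e He.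
      pose proof (exp_neg_inv_le_pow 0 e ltac:(unfold inI in He; lra)) as Hexp.
      simpl in Hexp. pose proof (Herr e He). lra.
    + exact Hs.
    + now apply negligible_of_le_exp with 2.
    + apply cont_I_sub; [now apply smooth_I_cont_I | exact Hc].
Qed.
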